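(* For any polynomial $f(\rho)$ of degree $d$ there exists a linear map $\mathcal{N}$ such that $\mathcal{N}(\rho^{\otimes d})=f(\rho)$. If $f$ is Hermitian-preserving and $f(\mathbf{1})\propto\mathbf{1}$, then $\mathcal{N}$ can also be chosen Hermitian-preserving with $\mathcal{N}(\mathbf{1}^{\otimes d})\propto\mathbf{1}$.
   Context: A polynomial of degree $d$ in the (density) operator $\rho$ on a finite-dimensional Hilbert space means a finite sum $f(\rho)=\sum_j A^{(j)}_{s_j}\rho A^{(j)}_{s_j-1}\rho\cdots A^{(j)}_1\rho A^{(j)}_0$ with fixed operator coefficients $A_i^{(j)}$ and $s_j\le d$. *)

(* Operators on the Hilbert space C^n are n x n matrices over
   an algebraically closed numeric field C (e.g. algC, or complex R). *)
From HB Require Import structures.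
From mathcomp Require Import all_boot all_order all_algebra.
From mathcomp Require Import mxtens.
Set Implicit Arguments. Unset Strict Implicit. Unset Printing Implicit Defensive.
Import Order.TTheory GRing.Theory Num.Theory.
Local Open Scope ring_scope.

Section Defs.
Variable C : numClosedFieldType.

Definition adjmx m n (A : 'M[C]_(m, n)) : 'M[C]_(n, m) := (map_mx Num.conj A)^T.

Definition hermitian_op n (A : 'M[C]_n) : Prop := adjmx A = A.

Definition psd n (A : 'M[C]_n) : Prop :=
  hermitian_op A /\ forall v : 'cV[C]_n, 0 <= (adjmx v *m A *m v) 0 0.

Definition density n (rho : 'M[C]_n) : Prop := psd rho /\ \tr rho = 1.

(* A monomial term  A_s rho A_{s-1} rho ... A_1 rho A_0  is encoded by the pair
   (A_0, [:: A_1; ...; A_s]); its degree s is the length of the list. *)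
Definition term n := ('M[C]_n * seq 'M[C]_n)%type.

Definition term_deg n (t : term n) : nat := size t.2.

Definition term_eval n (t : term n) (rho : 'M[C]_n) : 'M[C]_n :=
  foldl (fun acc A => A *m rho *m acc) t.1 t.2.

Definition poly_eval n (f : seq (term n)) (rho : 'M[C]_n) : 'M[C]_n :=
  \sum_(t <- f) term_eval t rho.

Definition poly_deg_le n (f : seq (term n)) (d : nat) : Prop :=
  all (fun t => term_deg t <= d)%N f.

Definition tpow n (rho : 'M[C]_n) (d : nat) : 'M[C]_(n ^ d) := ntensmx rho d.

End Defs.

From HB Require Import structures.
From mathcomp Require Import all_boot all_order all_algebra mxtens.
Import Order.TTheory GRing.Theory Num.Theory.
Local Open Scope ring_scope.
Set Implicit Arguments. Unset Strict Implicit. Unset Printing Implicit Defensive.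

(** Each monomial [A_s rho ... A_1 rho A_0] arises from the constant [A_0] by
   repeating [g |-> (rho |-> A rho g(rho))], and on trace-one [rho] the degree
   can be padded by [g(rho) = tr(rho) g(rho)].  Both steps are bilinear in
   [(rho, g(rho))], so by the universal property of the tensor product a linear
   map sending [rho^(x)k] to [g(rho)] yields one sending [rho^(x)(k+1)] to the
   new value.  For the second part, replace [N] by its Hermitian part
   [(N + (.)^dag o N o (.)^dag) / 2]: it still realizes [f] since both
   [rho^(x)d] and [f(rho)] are Hermitian, and it maps
   [1^(x)d = n^d (1/n)^(x)d] to [n^d f(1/n)], a multiple of [1]. *)

Lemma exists_linear (R : pzRingType) (U V : lmodType R) (f : U -> V) :
  linear f -> exists L : {linear U -> V}, L =1 f.
Proof.
move=> lin_f.
pose L : {linear U -> V} := HB.pack f (GRing.isLinear.Build _ _ _ _ f lin_f).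
by exists L.
Qed.

Section TensorLift.
Variables (R : pzRingType) (m1 n1 m2 n2 : nat).

Definition tens_block (i : 'I_m1) (j : 'I_n1) (X : 'M[R]_(m1 * m2, n1 * n2)) :
    'M[R]_(m2, n2) :=
  \matrix_(k, l) X (mxtens_index (i, k)) (mxtens_index (j, l)).

Lemma tens_block_is_linear i j : linear (tens_block i j).
Proof. by move=> a X Y; apply/matrixP => k l; rewrite !mxE. Qed.

HB.instance Definition _ i j :=
  GRing.isLinear.Build R _ _ _ (tens_block i j) (tens_block_is_linear i j).

Lemma tens_block_tensmx i j (A : 'M[R]_(m1, n1)) (B : 'M[R]_(m2, n2)) :
  tens_block i j (A *t B) = A i j *: B.
Proof. by apply/matrixP => k l; rewrite [LHS]mxE tensmxE mxE. Qed.

Lemma tensmx_lift p q (F : 'M[R]_(m1, n1) -> 'M[R]_(m2, n2) -> 'M[R]_(p, q)) :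
    (forall B, linear (F^~ B)) -> (forall A, linear (F A)) ->
  exists L : {linear 'M[R]_(m1 * m2, n1 * n2) -> 'M[R]_(p, q)},
    forall A B, L (A *t B) = F A B.
Proof.
move=> linFl linFr.
pose L X := \sum_i \sum_j F (delta_mx i j) (tens_block i j X).
have linL : linear L.
  move=> a X Y; rewrite /L scaler_sumr -big_split; apply: eq_bigr => i _.
  rewrite scaler_sumr -big_split; apply: eq_bigr => j _.
  by rewrite linearP linFr.
have [N NE] := exists_linear linL; exists N => A B.
have [G GE] := exists_linear (linFl B).
rewrite NE -GE {2}(matrix_sum_delta A) linear_sum; apply: eq_bigr => i _.
rewrite linear_sum; apply: eq_bigr => j _.
by rewrite tens_block_tensmx (scalable_linear (linFr _)) linearZ GE.
Qed.

End TensorLift.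

Section TensorScale.
Variable R : comPzRingType.

Lemma tensmxZl m1 n1 m2 n2 c (A : 'M[R]_(m1, n1)) (B : 'M[R]_(m2, n2)) :
  (c *: A) *t B = c *: (A *t B).
Proof. by apply/matrixP => i j; rewrite !mxE mulrA. Qed.

Lemma tensmxZr m1 n1 m2 n2 c (A : 'M[R]_(m1, n1)) (B : 'M[R]_(m2, n2)) :
  A *t (c *: B) = c *: (A *t B).
Proof. by apply/matrixP => i j; rewrite !mxE mulrCA. Qed.

Lemma ntensmxZ m n c (A : 'M[R]_(m, n)) d : (c *: A) ^t d = c ^+ d *: A ^t d.
Proof.
case: d => [|d]; first by rewrite expr0 scale1r.
elim: d => [|d IH]; first by rewrite expr1.
by rewrite !ntensmxSS IH tensmxZr tensmxZl scalerA -exprSr.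
Qed.

End TensorScale.

Section Realizable.
Variables (R : comPzRingType) (n : nat).

Definition realizable k (g : 'M[R]_n -> 'M[R]_n) :=
  exists N : {linear 'M[R]_(n ^ k) -> 'M[R]_n},
    forall rho, \tr rho = 1 -> N (rho ^t k) = g rho.

Lemma eq_realizable k g1 g2 :
    (forall rho, \tr rho = 1 -> g1 rho = g2 rho) ->
  realizable k g1 -> realizable k g2.
Proof. by move=> eq_g [N NE]; exists N => rho rho1; rewrite NE ?eq_g. Qed.

Lemma realizable_const A : realizable 0 (fun=> A).
Proof.
have lin : linear (fun X : 'M[R]_(n ^ 0) => X 0 0 *: A).
  by move=> a X Y; rewrite !mxE scalerDl scalerA.
have [N NE] := exists_linear lin.
by exists N => rho _; rewrite NE ntensmx0 mxE scale1r.
Qed.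

Lemma realizable_add k g1 g2 :
  realizable k g1 -> realizable k g2 -> realizable k (g1 \+ g2).
Proof.
by move=> [N1 N1E] [N2 N2E]; exists (N1 \+ N2) => rho rho1 /=; rewrite N1E ?N2E.
Qed.

Lemma realizable_bilinear k g (F : 'M[R]_n -> 'M[R]_n -> 'M[R]_n) :
    (forall Y, linear (F^~ Y)) -> (forall B, linear (F B)) ->
  realizable k g -> realizable k.+1 (fun rho => F rho (g rho)).
Proof.
move=> linFl linFr; case: k => [|k] [N NE].
  (* [rho ^t 1] is [rho] itself, not [rho *t rho ^t 0] (of size [n * 1]). *)
  have [L LE] := exists_linear (linFl (N 1)).
  by exists L => rho rho1; rewrite ntensmx1 LE -NE.
have linNr B : linear (fun Y => F B (N Y)).
  by move=> a X Y; rewrite linearP linFr.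
have [L LE] := tensmx_lift (fun Y : 'M_(n ^ k.+1) => linFl (N Y)) linNr.
by exists L => rho rho1; rewrite ntensmxSS LE NE.
Qed.

Lemma realizable_mul k g A :
  realizable k g -> realizable k.+1 (fun rho => A *m rho *m g rho).
Proof.
apply: (realizable_bilinear (F := fun B Y => A *m B *m Y)) => [Y | B] a X X'.
  by rewrite mulmxDr mulmxDl -scalemxAr -scalemxAl.
by rewrite mulmxDr -scalemxAr.
Qed.

Lemma realizable_raise k g : realizable k g -> realizable k.+1 g.
Proof.
move=> gk; apply: (eq_realizable (g1 := fun rho => \tr rho *: g rho)).
  by move=> rho ->; rewrite scale1r.
apply: (realizable_bilinear (F := fun B Y => \tr B *: Y)) gk => [Y | B] a X X'.
  by rewrite linearP scalerDl scalerA.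
by rewrite scalerDr !scalerA mulrC.
Qed.

Lemma realizable_le k d g : (k <= d)%N -> realizable k g -> realizable d g.
Proof.
move=> /subnK <-; elim: (d - k)%N => [//|i IH] gk.
exact/realizable_raise/IH.
Qed.

Lemma realizable_foldl k g (s : seq 'M[R]_n) :
    realizable k g ->
  realizable (k + size s)
    (fun rho => foldl (fun acc A => A *m rho *m acc) (g rho) s).
Proof.
elim: s k g => [|A s IH] k g gk /=; first by rewrite addn0.
by rewrite addnS -addSn; apply: IH; apply: realizable_mul.
Qed.

End Realizable.

Section Polynomial.
Variables (C : numClosedFieldType) (n : nat).

Lemma realizable_term (t : term C n) : realizable (term_deg t) (term_eval t).
Proof. by case: t => A s; exact: realizable_foldl s (realizable_const A). Qed.

Lemma realizable_poly (f : seq (term C n)) d :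
  poly_deg_le f d -> realizable d (poly_eval f).
Proof.
rewrite /poly_deg_le /poly_eval; elim: f => [_ | t f IH /= /andP[t_le f_le]].
  have zero_d := realizable_le (leq0n d) (realizable_const (0 : 'M[C]_n)).
  by apply: eq_realizable zero_d => rho _; rewrite big_nil.
have t_d := realizable_le t_le (realizable_term t).
apply: eq_realizable (realizable_add t_d (IH f_le)).
by move=> rho _; rewrite big_cons.
Qed.

End Polynomial.

Section Adjoint.
Variable C : numClosedFieldType.

Lemma adjmxK m p (A : 'M[C]_(m, p)) : adjmx (adjmx A) = A.
Proof. by apply/matrixP => i j; rewrite !mxE conjCK. Qed.

Lemma adjmxD m p (A B : 'M[C]_(m, p)) : adjmx (A + B) = adjmx A + adjmx B.
Proof. by apply/matrixP => i j; rewrite !mxE rmorphD. Qed.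

Lemma adjmxZ m p a (A : 'M[C]_(m, p)) : adjmx (a *: A) = a^* *: adjmx A.
Proof. by apply/matrixP => i j; rewrite !mxE rmorphM. Qed.

Lemma adjmx1 m : adjmx (1%:M : 'M[C]_m) = 1%:M.
Proof. by rewrite /adjmx map_mx1 trmx1. Qed.

Lemma adjmx_tens m1 n1 m2 n2 (A : 'M[C]_(m1, n1)) (B : 'M[C]_(m2, n2)) :
  adjmx (A *t B) = adjmx A *t adjmx B.
Proof. by rewrite /adjmx map_mxT trmx_tens. Qed.

Lemma hermitian_ntensmx n (rho : 'M[C]_n) d :
  hermitian_op rho -> hermitian_op (rho ^t d).
Proof.
rewrite /hermitian_op => rhoH; case: d => [|d]; first exact: adjmx1.
by elim: d => [//|d IH]; rewrite ntensmxSS adjmx_tens rhoH IH.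
Qed.

Lemma adjmx_mul_ge0 n (v : 'cV[C]_n) : 0 <= (adjmx v *m v) 0 0.
Proof. by rewrite mxE sumr_ge0 // => i _; rewrite !mxE mulrC mul_conjC_ge0. Qed.

Lemma density_maximally_mixed n :
  (0 < n)%N -> density (n%:R^-1 *: (1 : 'M[C]_n)).
Proof.
move=> n_gt0; have nC_neq0 : (n%:R : C) != 0 by rewrite pnatr_eq0 -lt0n.
split; last by rewrite mxtraceZ mxtrace1 mulVf.
split; first by rewrite /hermitian_op adjmxZ adjmx1 fmorphV rmorph_nat.
move=> v; rewrite -scalemxAr -scalemxAl mulmx1 mxE.
by rewrite mulr_ge0 ?adjmx_mul_ge0 // invr_ge0 ler0n.
Qed.

Lemma hermitian_part_linear m p (N : {linear 'M[C]_m -> 'M[C]_p}) :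
  exists N' : {linear 'M[C]_m -> 'M[C]_p},
    (forall X, hermitian_op X -> hermitian_op (N' X)) /\
    (forall X, hermitian_op X -> hermitian_op (N X) -> N' X = N X).
Proof.
pose N' X := 2^-1 *: (N X + adjmx (N (adjmx X))).
have lin : linear N'.
  move=> a X Y; rewrite /N' adjmxD adjmxZ !linearP adjmxD !adjmxZ conjCK.
  by rewrite addrACA !scalerDr !scalerA [a * _]mulrC.
have two_neq0 : (2 : C) != 0 by rewrite pnatr_eq0.
have [L LE] := exists_linear lin; exists L; split => X XH; rewrite LE /N' XH.
  by rewrite /hermitian_op adjmxZ adjmxD adjmxK fmorphV rmorph_nat addrC.
by move=> NXH; rewrite NXH -mulr2n -scaler_nat scalerA mulVf ?scale1r.
Qed.

End Adjoint.

Lemma realized_ntensmx1_scalar (C : numClosedFieldType) n d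
    (g : 'M[C]_n -> 'M[C]_n) (N : {linear 'M[C]_(n ^ d) -> 'M[C]_n}) (c : C) :
    (forall rho, density rho -> N (rho ^t d) = g rho) ->
    g (n%:R^-1 *: (1 : 'M[C]_n)) = c *: (1 : 'M[C]_n) ->
  exists c', N ((1 : 'M[C]_n) ^t d) = c' *: (1 : 'M[C]_n).
Proof.
case: n g N => [|n] g N Ng gc; first by exists 0; apply/matrixP => -[].
have nC_neq0 : (n.+1%:R : C) != 0 by rewrite pnatr_eq0.
have one_mixed : (1 : 'M[C]_n.+1) = n.+1%:R *: (n.+1%:R^-1 *: 1).
  by rewrite scalerA divff ?scale1r.
exists (n.+1%:R ^+ d * c).
rewrite {1}one_mixed ntensmxZ linearZ /= Ng.
  by move: gc => ->; rewrite scalerA.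
exact: density_maximally_mixed.
Qed.

Theorem lemma2 (C : numClosedFieldType) (n d : nat) (f : seq (term C n)) :
  poly_deg_le f d ->
  (* part 1 *)
  (exists N : {linear 'M[C]_(n ^ d) -> 'M[C]_n},
     forall rho : 'M[C]_n, density rho -> N (tpow rho d) = poly_eval f rho) /\
  (* part 2 *)
  ((forall X : 'M[C]_n, hermitian_op X -> hermitian_op (poly_eval f X)) ->
   (exists c : C, poly_eval f (n%:R^-1 *: (1 : 'M[C]_n)) = c *: (1 : 'M[C]_n)) ->
   exists N : {linear 'M[C]_(n ^ d) -> 'M[C]_n},
     (forall rho : 'M[C]_n, density rho -> N (tpow rho d) = poly_eval f rho) /\
     (forall X : 'M[C]_(n ^ d), hermitian_op X -> hermitian_op (N X)) /\
     (exists c : C, N (tpow (1 : 'M[C]_n) d) = c *: (1 : 'M[C]_n))).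
Proof.
move=> f_le; have [N NE] := realizable_poly f_le.
split; first by exists N => rho [_]; apply: NE.
move=> f_herm [c fc]; have [N' [N'_herm N'E]] := hermitian_part_linear N.
have N'_density rho : density rho -> N' (tpow rho d) = poly_eval f rho.
  move=> [[rhoH _] rho1].
  by rewrite N'E ?NE //; [exact: hermitian_ntensmx d rhoH | apply: f_herm].
exists N'; split=> //; split=> //.
exact: realized_ntensmx1_scalar N'_density fc.
Qed.
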